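(* Let $d\ge2$, $a\ge d$, $d'=1$, $t\ge2$, and fix $n\ne j$ in $[t]$. Let $F_{n,j}$ be the $D\times d$ matrix, $D=\binom{d+1}{2}$, with rows indexed by $\{k_1,k_2\}\in\operatorname{Mult}_2([d])$, columns by $k_3\in[d]$, and entries $y_{n,j}(\{k_1,k_2\},k_3)$. Then there exist at least $\binom{D}{d}-\binom{2d-1}{d}$ linearly independent homogeneous polynomials of degree $d$, each a linear combination of the maximal $d\times d$ minors of $F_{n,j}$, that vanish on the attention variety.
   Context: Setup: $Q,K\in\mathbb R^{a\times d}$, $V\in\mathbb R^{1\times d}$, $A=K^\top Q$, $\varphi_W(X)=VX(X^\top AX)$ for $X=(x_{kn})\in\mathbb R^{d\times t}$. For $\mathcal A\in\operatorname{Mult}_2([d])$ (size-2 multisets on $[d]$), $b\in[d]$, $n\ne j$: $c_{n,j}(\mathcal A,b)$ is the coefficient of $(\prod_{u\in\mathcal A}x_{un})x_{bj}$ in $\varphi_W(X)[1,j]$ and $y_{n,j}(\mathcal A,b)=c_{n,j}(\mathcal A,b)/|\operatorname{Perm}(\mathcal A)|$, $\operatorname{Perm}$ the set of distinct orderings. $\mu$ maps $W=(Q,K,V)$ to all scaled coefficients (ambient coordinates with the same names); the attention variety is the Zariski closure of $\operatorname{im}\mu$. *)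

From HB Require Import structures.
From mathcomp Require Import all_boot all_order all_algebra.
From mathcomp Require Import mpoly.
From mathcomp Require Import reals.

Set Implicit Arguments.
Unset Strict Implicit.
Unset Printing Implicit Defensive.

Import Order.TTheory GRing.Theory Num.Theory.
Local Open Scope ring_scope.

(* Size-2 multisets on [d] = {0,...,d-1}: unordered pairs {k1,k2} encoded as
   ordered pairs with k1 <= k2. *)
Definition M2 (d : nat) := {p : 'I_d * 'I_d | (p.1 <= p.2)%N}.
HB.instance Definition _ d := Finite.on (M2 d).

(* |Perm(A)| : number of distinct orderings of the multiset A *)
Definition permsz d (m : M2 d) : nat :=
  if (val m).1 == (val m).2 then 1%N else 2%N.

Definition Xmat (R : nzRingType) (d t : nat) : 'M[{mpoly R[d * t]}]_(d, t) :=
  \matrix_(k < d, n < t) 'X_(mxvec_index k n).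

Definition phiW (R : comNzRingType) (a d t : nat) (Q K : 'M[R]_(a, d))
    (V : 'rV[R]_d) : 'M[{mpoly R[d * t]}]_(1, t) :=
  let A := K^T *m Q in
  let C := fun (m n : nat) (M : 'M[R]_(m, n)) => map_mx (fun x => x%:MP) M in
  (C _ _ V *m Xmat R d t) *m (((Xmat R d t)^T *m C _ _ A) *m Xmat R d t).

Definition monAbj d t (m : M2 d) (b : 'I_d) (n j : 'I_t) : 'X_{1.. d * t} :=
  (U_(mxvec_index (val m).1 n) + U_(mxvec_index (val m).2 n)
    + U_(mxvec_index b j))%MM.

Definition coef_c (R : comNzRingType) (a d t : nat) (Q K : 'M[R]_(a, d))
    (V : 'rV[R]_d) (n j : 'I_t) (m : M2 d) (b : 'I_d) : R :=
  (@phiW R a d t Q K V 0 j)@_(monAbj m b n j).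

Definition coef_y (R : fieldType) (a d t : nat) (Q K : 'M[R]_(a, d))
    (V : 'rV[R]_d) (n j : 'I_t) (m : M2 d) (b : 'I_d) : R :=
  @coef_c R a d t Q K V n j m b / (permsz m)%:R.

(* Ambient coordinates: y_{n,j}(A,b) for n != j in [t], A in Mult_2([d]),
   b in [d]. *)
Definition Idx (t d : nat) :=
  {x : ('I_t * 'I_t) * (M2 d * 'I_d) | x.1.1 != x.1.2}.
HB.instance Definition _ t d := Finite.on (Idx t d).

Definition NV (t d : nat) : nat := #|{: Idx t d}|.

Definition ycoord (R : nzRingType) (t d : nat) (i : Idx t d)
  : {mpoly R[NV t d]} := 'X_(enum_rank i).

Definition mu (R : fieldType) (a d t : nat) (Q K : 'M[R]_(a, d))
    (V : 'rV[R]_d) : 'I_(NV t d) -> R :=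
  fun v => let i := val (enum_val v) in
           @coef_y R a d t Q K V i.1.1 i.1.2 i.2.1 i.2.2.

(* The attention variety: Zariski closure of im mu, i.e. the common zero set
   of all polynomials vanishing on im mu. *)
Definition attention_variety (R : fieldType) (a d t : nat)
    (z : 'I_(NV t d) -> R) : Prop :=
  forall p : {mpoly R[NV t d]},
    (forall (Q K : 'M[R]_(a, d)) (V : 'rV[R]_d), p.@[@mu R a d t Q K V] = 0) ->
    p.@[z] = 0.

Definition vanishes_on_attention_variety (R : fieldType) (a d t : nat)
    (p : {mpoly R[NV t d]}) : Prop :=
  forall z, attention_variety a z -> p.@[z] = 0.

Definition Fnj (R : nzRingType) (t d : nat) (n j : 'I_t) (hnj : n != j)
  : 'M[{mpoly R[NV t d]}]_(#|{: M2 d}|, d) :=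
  \matrix_(r, k) ycoord R (Sub ((n, j), (enum_val r, k)) hnj : Idx t d).

(* Maximal (d x d) minors: determinants of the submatrices on a strictly
   increasing choice of d rows. *)
Definition incr_rows (d D : nat) (f : {ffun 'I_d -> 'I_D}) : bool :=
  [forall i1 : 'I_d, forall i2 : 'I_d, (i1 < i2)%N ==> (f i1 < f i2)%N].

Definition in_span_of_max_minors (R : comNzRingType) (t d : nat) (n j : 'I_t)
    (hnj : n != j) (p : {mpoly R[NV t d]}) : Prop :=
  exists c : {ffun 'I_d -> 'I_#|{: M2 d}|} -> R,
    p = \sum_(f | incr_rows f) c f *: \det (rowsub f (@Fnj R t d n j hnj)).

Definition lin_indep (R : nzRingType) (N k : nat) (ps : 'I_k -> {mpoly R[N]})
  : Prop :=
  forall c : 'I_k -> R, \sum_(i < k) c i *: ps i = 0 -> forall i, c i = 0.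

From HB Require Import structures.
From mathcomp Require Import all_boot all_order all_algebra.
From mathcomp Require Import fingroup perm.
From mathcomp Require Import mpoly.
From mathcomp Require Import reals.
From mathcomp Require Import ring zify.

(* Write A := K^T Q and D := #|Mult_2([d])|.  The coefficient y_{n,j}({k1,k2}, b)
   of mu(Q, K, V) equals (V_k1 A_{k2 b} + V_k2 A_{k1 b}) / 2, the ({k1,k2}, b)
   entry of G(V) A, where G(V) is a D x d matrix whose entries are linear
   forms in V.  Hence at the point mu(Q, K, V) every maximal minor of F_{n,j}
   is det A times the corresponding maximal minor of G(V), a form of degree d
   in the d entries of V.  There are binom(D, d) such minors, and they live in
   the binom(2d-1, d)-dimensional space of degree-d forms in d variables, so
   at least binom(D, d) - binom(2d-1, d) independent linear relations among
   the minors of G hold identically; the same combinations of the minors of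
   F_{n,j} vanish on the image of mu, hence on its Zariski closure.  They stay
   linearly independent as polynomials because the entries of F_{n,j} are
   distinct variables: at a 0/1 point exactly one maximal minor is nonzero. *)

Set Implicit Arguments.
Unset Strict Implicit.
Unset Printing Implicit Defensive.
Import Order.TTheory GRing.Theory Num.Theory.
Local Open Scope ring_scope.

Lemma perm_eq_pair (T : eqType) (x y x' y' : T) :
  perm_eq [:: x; y] [:: x'; y'] = (x == x') && (y == y') || (x == y') && (y == x').
Proof.
have swap (u v : T) : perm_eq [:: u; v] [:: v; u].
  exact: permEl (perm_catC [:: u] [:: v]).
have single (u v : T) : perm_eq [:: u] [:: v] -> u = v.
  by move=> /perm_mem /(_ u); rewrite !inE eqxx => /esym/eqP.
apply/idP/idP => [h|/orP[]/andP[/eqP-> /eqP->] //].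
have := perm_mem h x; rewrite !inE eqxx => /esym/orP[]/eqP ex; subst x.
- by move: h; rewrite perm_cons => /single ->; rewrite !eqxx.
- move: (perm_trans h (swap _ _)); rewrite perm_cons => /single ->.
  by rewrite !eqxx orbT.
Qed.

Lemma perm_eq_tagged3 (T1 T2 : eqType) (k p q k1 k2 b : T1) (l n j : T2) :
  n != j ->
  perm_eq [:: (k, l); (p, l); (q, j)] [:: (k1, n); (k2, n); (b, j)]
  = [&& l == n, q == b & perm_eq [:: k; p] [:: k1; k2]].
Proof.
move=> nj.
have reduce : perm_eq [:: (k, n); (p, n); (b, j)] [:: (k1, n); (k2, n); (b, j)]
              = perm_eq [:: k; p] [:: k1; k2].
  rewrite -[[:: (k, n); _; _]]/([:: (k, n); (p, n)] ++ [:: (b, j)]).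
  rewrite -[[:: (k1, n); _; _]]/([:: (k1, n); (k2, n)] ++ [:: (b, j)]).
  by rewrite perm_cat2r !perm_eq_pair !xpair_eqE !eqxx !andbT.
apply/idP/and3P => [h|[/eqP-> /eqP->]]; last by rewrite reduce.
have nl : n = l.
  have := perm_mem h (k1, n); rewrite !inE !xpair_eqE !eqxx /=.
  by case/or3P => /andP[_ /eqP] // jn; rewrite jn eqxx in nj.
subst l; have bq : b = q.
  have := perm_mem h (b, j); rewrite !inE !xpair_eqE !eqxx !andbT !orbT.
  by case/or3P => [/andP[_ /eqP jn]|/andP[_ /eqP jn]|/eqP //];
    rewrite jn eqxx in nj.
by subst q; rewrite -reduce.
Qed.

Lemma mnm1D3_eq N (a b c x y z : 'I_N) :
  ((U_(a) + U_(b) + U_(c))%MM == (U_(x) + U_(y) + U_(z))%MM)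
  = perm_eq [:: a; b; c] [:: x; y; z].
Proof.
apply/eqP/idP => [h|/seq.permP h].
- apply/allP => i _ /=.
  have := congr1 (fun m : 'X_{1.. N} => m i) h; rewrite !mnmDE !mnm1E /=.
  by rewrite !addn0 !addnA => ->.
- apply/mnmP => i; rewrite !mnmDE !mnm1E.
  by have := h (pred1 i); rewrite /= !addn0 !addnA.
Qed.

Lemma mxvec_index_inj m n :
  injective (fun kl : 'I_m * 'I_n => mxvec_index kl.1 kl.2).
Proof. by move=> [k l] [k' l'] /cast_ord_inj /enum_rank_inj. Qed.

Lemma natr_or (R : pzSemiRingType) (a b : bool) :
  ~~ (a && b) -> ((a || b)%:R : R) = a%:R + b%:R.
Proof. by case: a; case: b => //= _; rewrite ?addr0 ?add0r. Qed.

Lemma sum_delta (R : pzSemiRingType) d (x : 'I_d) (F : 'I_d -> R) :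
  \sum_(l < d) (l == x)%:R * F l = F x.
Proof.
by rewrite (big_only1 x) // ?eqxx ?mul1r // => l /negbTE-> _; rewrite mul0r.
Qed.

Lemma sum_delta2 (R : pzSemiRingType) d (x y : 'I_d) (F : 'I_d -> 'I_d -> R) :
  \sum_(k < d) \sum_(p < d) F k p * ((k == x) && (p == y))%:R = F x y.
Proof.
rewrite (big_only1 x) // => [|k /negbTE kx _]; last first.
  by apply: big1 => p _; rewrite kx mulr0.
by rewrite (big_only1 y) ?eqxx ?mulr1 // => p /negbTE-> _; rewrite andbF mulr0.
Qed.

Lemma sum_perm_eq_pair (R : pzSemiRingType) d (x y : 'I_d)
    (F : 'I_d -> 'I_d -> R) :
  \sum_(k < d) \sum_(p < d) F k p * (perm_eq [:: k; p] [:: x; y])%:R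
  = F x y + (x != y)%:R * F y x.
Proof.
under eq_bigr => k _ do under eq_bigr => p _ do rewrite perm_eq_pair.
have [<-|nxy] := eqVneq x y.
  under eq_bigr => k _ do under eq_bigr => p _ do rewrite orbb.
  by rewrite sum_delta2 mul0r addr0.
have disj k p : ~~ (((k == x) && (p == y)) && ((k == y) && (p == x))).
  apply/negP => /andP[/andP[/eqP-> _] /andP[/eqP xy _]].
  by rewrite xy eqxx in nxy.
under eq_bigr => k _ do under eq_bigr => p _ do rewrite natr_or // mulrDr.
under eq_bigr => k _ do rewrite big_split /=.
by rewrite big_split /= !sum_delta2 mul1r.
Qed.

Lemma phiW_entry (R : comNzRingType) a d t (Q K : 'M[R]_(a, d)) V (j : 'I_t) :
  @phiW R a d t Q K V 0 j =
  \sum_(l < t) \sum_(k < d) \sum_(q < d) \sum_(p < d)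
    (V 0 k * (K^T *m Q) p q)%:MP *
    'X_[U_(mxvec_index k l) + U_(mxvec_index p l) + U_(mxvec_index q j)].
Proof.
rewrite /phiW /= !mxE; apply: eq_bigr => l _; rewrite !mxE mulr_suml.
apply: eq_bigr => k _; rewrite !mxE mulr_sumr.
apply: eq_bigr => q _; rewrite !mxE mulr_suml mulr_sumr.
apply: eq_bigr => p _; rewrite !mxE !mpolyXD mpolyCM.
ring.
Qed.

Lemma monAbj_eq d t (k p q b : 'I_d) (l n j : 'I_t) (m : M2 d) : n != j ->
  ((U_(mxvec_index k l) + U_(mxvec_index p l) + U_(mxvec_index q j))%MM
     == monAbj m b n j)
  = [&& l == n, q == b & perm_eq [:: k; p] [:: (val m).1; (val m).2]].
Proof.
move=> nj; rewrite mnm1D3_eq -(perm_eq_tagged3 k p q _ _ b l nj).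
apply/idP/idP => [h|/(perm_map (fun kl => mxvec_index kl.1 kl.2)) //].
exact: (perm_map_inj (@mxvec_index_inj d t)).
Qed.

Lemma coef_c_val (R : comNzRingType) a d t (Q K : 'M[R]_(a, d)) V
    (n j : 'I_t) (m : M2 d) (b : 'I_d) : n != j ->
  @coef_c R a d t Q K V n j m b =
  V 0 (val m).1 * (K^T *m Q) (val m).2 b
  + ((val m).1 != (val m).2)%:R * (V 0 (val m).2 * (K^T *m Q) (val m).1 b).
Proof.
move=> nj; rewrite /coef_c phiW_entry raddf_sum /= (big_only1 n) //=
  => [|l /negbTE ln _].
- rewrite -(sum_perm_eq_pair _ _ (fun k p => V 0 k * (K^T *m Q) p b)) raddf_sum /=.
  apply: eq_bigr => k _.
  rewrite raddf_sum /= (big_only1 b) //= => [|q /negbTE qb _].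
  + rewrite raddf_sum /=; apply: eq_bigr => p _.
    by rewrite mcoeffCM mcoeffX monAbj_eq // !eqxx.
  + rewrite raddf_sum /= big1 // => p _.
    by rewrite mcoeffCM mcoeffX monAbj_eq // qb andbF mulr0.
- rewrite raddf_sum /= big1 // => k _; rewrite raddf_sum /= big1 // => q _.
  rewrite raddf_sum /= big1 // => p _.
  by rewrite mcoeffCM mcoeffX monAbj_eq // ln mulr0.
Qed.

Lemma coef_y_val (R : fieldType) a d t (Q K : 'M[R]_(a, d)) V
    (n j : 'I_t) (m : M2 d) (b : 'I_d) : n != j -> (2%:R : R) != 0 ->
  @coef_y R a d t Q K V n j m b =
  (V 0 (val m).1 * (K^T *m Q) (val m).2 b
   + V 0 (val m).2 * (K^T *m Q) (val m).1 b) / 2%:R.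
Proof.
move=> nj two_neq0; rewrite /coef_y coef_c_val // /permsz.
have [->|ne] := eqVneq (val m).1 (val m).2; last by rewrite mul1r.
by rewrite mul0r addr0 divr1; field.
Qed.

Definition lin_form_mx (R : pzRingType) m n l (g : 'I_m -> 'I_n -> 'I_l -> R)
    (v : 'rV[R]_l) : 'M[R]_(m, n) :=
  \matrix_(r, i) \sum_(s < l) g r i s * v 0 s.

Definition row_pair d (r : 'I_#|{: M2 d}|) : 'I_d * 'I_d := val (enum_val r).

(* [lin_form_mx sym_coef v] is the matrix G(v): its row {k1,k2} is
   (v_k1 e_k2 + v_k2 e_k1) / 2. *)
Definition sym_coef (R : fieldType) d (r : 'I_#|{: M2 d}|) (i s : 'I_d) : R :=
  ((s == (row_pair r).1)%:R * (i == (row_pair r).2)%:R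
   + (s == (row_pair r).2)%:R * (i == (row_pair r).1)%:R) / 2%:R.

Section SymmetricProduct.
Variables (R : fieldType) (d : nat) (v : 'rV[R]_d).
Local Notation k1 r := (row_pair r).1.
Local Notation k2 r := (row_pair r).2.

Lemma sym_mx_entry r i :
  lin_form_mx (@sym_coef R d) v r i
  = ((i == k2 r)%:R * v 0 (k1 r) + (i == k1 r)%:R * v 0 (k2 r)) / 2%:R.
Proof.
rewrite mxE (eq_bigr (fun s => (s == k1 r)%:R * ((i == k2 r)%:R * v 0 s / 2%:R)
                        + (s == k2 r)%:R * ((i == k1 r)%:R * v 0 s / 2%:R))).
  by rewrite big_split /= !sum_delta; ring.
by move=> s _; rewrite /sym_coef; ring.
Qed.

Lemma mul_sym_mx (A : 'M[R]_d) r b :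
  (lin_form_mx (@sym_coef R d) v *m A) r b
  = (v 0 (k1 r) * A (k2 r) b + v 0 (k2 r) * A (k1 r) b) / 2%:R.
Proof.
rewrite mxE (eq_bigr (fun i => (i == k2 r)%:R * (v 0 (k1 r) * A i b / 2%:R)
                        + (i == k1 r)%:R * (v 0 (k2 r) * A i b / 2%:R))).
  by rewrite big_split /= !sum_delta; ring.
by move=> i _; rewrite sym_mx_entry; ring.
Qed.

End SymmetricProduct.

(* Multisets of size n in 'I_l, i.e. monomials of degree n in l variables. *)
Definition mset n l := {t : n.-tuple 'I_l | sorted leq (map val t)}.
HB.instance Definition _ n l := Finite.on (mset n l).

Definition incr_sel n D := {f : {ffun 'I_n -> 'I_D} | incr_rows f}.
HB.instance Definition _ n D := Finite.on (incr_sel n D).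

Section MinorExpansion.
Variables (R : comNzRingType) (n D l : nat) (g : 'I_D -> 'I_n -> 'I_l -> R).

Definition minor_coef (f : 'I_n -> 'I_D) (L : {ffun 'I_n -> 'I_l}) : R :=
  \sum_(s : 'S_n) (-1) ^+ s * \prod_(i < n) g (f i) (s i) (L i).

Lemma det_lin_form_mx (f : 'I_n -> 'I_D) (v : 'rV[R]_l) :
  \det (rowsub f (lin_form_mx g v))
  = \sum_(L : {ffun 'I_n -> 'I_l}) minor_coef f L * \prod_(i < n) v 0 (L i).
Proof.
rewrite /determinant.
under eq_bigr => s _ do under eq_bigr => i _ do rewrite !mxE.
under eq_bigr => s _ do rewrite bigA_distr_bigA mulr_sumr.
rewrite exchange_big /=; apply: eq_bigr => L _.
rewrite /minor_coef mulr_suml; apply: eq_bigr => s _.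
by rewrite big_split /= mulrA.
Qed.

Lemma mset_of_subproof (L : {ffun 'I_n -> 'I_l}) :
  sorted leq (map val (sort_tuple (relpre val leq) [tuple L i | i < n])).
Proof. by rewrite sorted_map; apply: sort_sorted => x y; exact: leq_total. Qed.

Definition mset_of (L : {ffun 'I_n -> 'I_l}) : mset n l :=
  exist (fun t : n.-tuple _ => sorted leq (map val t)) _ (mset_of_subproof L).

Definition mset_mon (v : 'rV[R]_l) (t : mset n l) : R :=
  \prod_(i < n) v 0 (tnth (val t) i).

Lemma prod_mset_of (v : 'rV[R]_l) (L : {ffun 'I_n -> 'I_l}) :
  \prod_(i < n) v 0 (L i) = mset_mon v (mset_of L).
Proof.
rewrite /mset_mon /=; set t := [tuple L i | i < n].
transitivity (\prod_(x <- t) v 0 x).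
  by rewrite big_tuple; apply: eq_bigr => i _; rewrite tnth_mktuple.
transitivity (\prod_(x <- sort (relpre val leq) t) v 0 x).
  by apply: perm_big; rewrite perm_sym perm_sort perm_refl.
by rewrite -[LHS]/(\prod_(x <- sort_tuple (relpre val leq) t) v 0 x) big_tuple.
Qed.

(* Row u: the maximal minor of [lin_form_mx g v] on the rows u, as a form in v,
   written in the monomial basis. *)
Definition minor_coef_mx : 'M[R]_(#|{: incr_sel n D}|, #|{: mset n l}|) :=
  \matrix_(u, w) \sum_(L | enum_rank (mset_of L) == w)
                   minor_coef (val (enum_val u : incr_sel n D)) L.

Lemma det_lin_form_mx_mset (u : 'I_#|{: incr_sel n D}|) (v : 'rV[R]_l) :
  \det (rowsub (val (enum_val u)) (lin_form_mx g v))
  = \sum_(w < #|{: mset n l}|) minor_coef_mx u w * mset_mon v (enum_val w).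
Proof.
rewrite det_lin_form_mx (partition_big (fun L => enum_rank (mset_of L)) predT) //=.
apply: eq_bigr => w _; rewrite mxE mulr_suml; apply: eq_bigr => L /eqP <-.
by rewrite prod_mset_of enum_rankK.
Qed.

Lemma minor_comb_lin_form_mx_eq0 (v : 'rV[R]_l) (c : 'rV[R]_#|{: incr_sel n D}|) :
  c *m minor_coef_mx = 0 ->
  \sum_u c 0 u * \det (rowsub (val (enum_val u)) (lin_form_mx g v)) = 0.
Proof.
move=> /rowP cK.
under eq_bigr => u _ do rewrite det_lin_form_mx_mset mulr_sumr.
rewrite exchange_big /=; apply: big1 => w _.
have := cK w; rewrite !mxE => cKw.
transitivity ((\sum_u c 0 u * minor_coef_mx u w) * mset_mon v (enum_val w)).
  by rewrite mulr_suml; apply: eq_bigr => u _; rewrite mulrA.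
by rewrite cKw mul0r.
Qed.

End MinorExpansion.

Lemma card_mset n l : #|{: mset n l.+1}| = 'C(n + l, n).
Proof. by rewrite card_sig -cardsE card_sorted_tuples. Qed.

Lemma M2_to_mset_subproof d (p : M2 d) :
  sorted leq (map val [tuple (val p).1; (val p).2]).
Proof. by rewrite /= andbT; exact: (valP p). Qed.

Definition M2_to_mset d (p : M2 d) : mset 2 d :=
  exist (fun t : 2.-tuple 'I_d => sorted leq (map val t)) _ (M2_to_mset_subproof p).

Lemma mset_to_M2_subproof d (t : mset 2 d) :
  (tnth (val t) ord0 <= tnth (val t) (lift ord0 ord0))%N.
Proof.
case: t => t /=; case/tupleP: t => x t; case/tupleP: t => y t.
by rewrite tuple0 /= andbT.
Qed.

Definition mset_to_M2 d (t : mset 2 d) : M2 d :=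
  exist (fun p : 'I_d * 'I_d => (p.1 <= p.2)%N) (_, _) (mset_to_M2_subproof t).

Lemma card_M2 d : #|{: M2 d}| = 'C(d.+1, 2).
Proof.
rewrite (@bij_eq_card _ _ (@M2_to_mset d)); last first.
  exists (@mset_to_M2 d) => [[[x y] h]|[t h]]; apply: val_inj => //=.
  apply: eq_from_tnth => i.
  case/tupleP: t h => x t; case/tupleP: t => y t; rewrite tuple0 => h.
  by case: i => [[|[|]]] //= ?; rewrite !(tnth_nth x).
case: d => [|d]; last by rewrite card_mset add2n.
by rewrite bin_small // card_sig; apply: eq_card0 => t; case/tupleP: t => -[].
Qed.

Section IncreasingSelections.
Variables n D : nat.
Implicit Types f g : {ffun 'I_n -> 'I_D}.

Lemma incr_rows_tnth (t : n.-tuple 'I_D) :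
  sorted ltn (map val t) -> incr_rows [ffun i => tnth t i].
Proof.
move=> st; apply/forallP => i1; apply/forallP => i2; apply/implyP => lt.
have := @sorted_ltn_nth _ ltn ltn_trans 0%N _ st i1 i2.
rewrite !inE size_map size_tuple !ltn_ord => /(_ isT isT lt).
by rewrite !(nth_map (tnth t i1)) ?size_tuple // !ffunE -!tnth_nth.
Qed.

Lemma card_incr_sel : ('C(D, n) <= #|{: incr_sel n D}|)%N.
Proof.
rewrite -card_ltn_sorted_tuples cardsE -card_sig.
pose sel (t : {t : n.-tuple 'I_D | sorted ltn (map val t)}) : incr_sel n D :=
  exist (fun f => incr_rows f) _ (incr_rows_tnth (valP t)).
apply: (@leq_card _ _ sel) => -[t1 h1] [t2 h2] /(congr1 val) /= e.
apply: val_inj; apply: eq_from_tnth => i /=.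
by have := congr1 (fun f : {ffun _ -> _} => f i) e; rewrite !ffunE.
Qed.

Lemma incr_rows_sorted f :
  incr_rows f -> sorted (relpre val ltn) (map f (enum 'I_n)).
Proof.
move=> /forallP hf; rewrite sorted_map.
have : sorted (relpre val ltn) (enum 'I_n).
  by rewrite -sorted_map val_enum_ord iota_ltn_sorted.
apply: sub_sorted => i1 i2 /= lt.
by have := hf i1 => /forallP /(_ i2) /implyP /(_ lt).
Qed.

Lemma incr_rows_inj f : incr_rows f -> injective f.
Proof.
move=> /forallP hf i1 i2 e; apply: val_inj; case: (ltngtP i1 i2) => // lt.
- by have := hf i1 => /forallP /(_ i2) /implyP /(_ lt); rewrite e ltnn.
- by have := hf i2 => /forallP /(_ i1) /implyP /(_ lt); rewrite e ltnn.
Qed.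

Lemma incr_rows_eq f g : incr_rows f -> incr_rows g ->
  (forall i, exists k, f i = g k) -> f = g.
Proof.
move=> hf hg hfg.
have tr : transitive (relpre (@nat_of_ord D) ltn) by move=> x y z; exact: ltn_trans.
have irr : irreflexive (relpre (@nat_of_ord D) ltn) by move=> x; exact: ltnn.
have sf := incr_rows_sorted hf; have sg := incr_rows_sorted hg.
have sub : {subset map f (enum 'I_n) <= map g (enum 'I_n)}.
  move=> x /mapP [i _ ->]; have [k ->] := hfg i.
  by apply: map_f; rewrite mem_enum.
have [_ eqm] : ((size (map f (enum 'I_n)) = size (map g (enum 'I_n))) *
    (map f (enum 'I_n) =i map g (enum 'I_n)))%type.
  by apply: uniq_min_size (sorted_uniq tr irr sf) sub _; rewrite !size_map.
have e := irr_sorted_eq tr irr sf sg eqm.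
apply/ffunP => i; have := congr1 (fun s => nth (f i) s i) e.
rewrite !(nth_map i) -?enumT ?size_enum_ord ?ltn_ord //.
by rewrite nth_ord_enum.
Qed.

Lemma det_rowsub_indicator (R : comNzRingType) f g : incr_rows f -> incr_rows g ->
  \det (rowsub f (\matrix_(r, k) ((r == g k)%:R : R))) = (f == g)%:R.
Proof.
move=> hf hg; have [<-|ne] := eqVneq f g.
  suff -> : rowsub f (\matrix_(r, k) ((r == f k)%:R : R)) = 1%:M by rewrite det1.
  by apply/matrixP => i k; rewrite !mxE (inj_eq (incr_rows_inj hf)).
have /existsP [i0 /forallP hi0] : [exists i0, [forall k, f i0 != g k]].
  move: ne; apply: contraR => /existsPn h; apply/eqP.
  apply: incr_rows_eq => // i; have /forallPn [k /negPn /eqP e] := h i.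
  by exists k.
rewrite (expand_det_row _ i0) big1 // => k _.
by rewrite !mxE (negbTE (hi0 k)) mul0r.
Qed.

Lemma big_incr_rows (M : nmodType) (G : {ffun 'I_n -> 'I_D} -> M) :
  \sum_(f | incr_rows f) G f = \sum_(u < #|{: incr_sel n D}|) G (val (enum_val u)).
Proof.
rewrite (reindex_omap (val : incr_sel n D -> _) insub) /=; last first.
  by move=> f hf; rewrite insubT.
rewrite (eq_bigl predT); last by move=> x; rewrite (valP x) valK eqxx.
by apply: (reindex enum_val); apply: onW_bij; exact: enum_val_bij.
Qed.

End IncreasingSelections.

Lemma row_free_rowsub (F : fieldType) m n p (f : 'I_p -> 'I_m) (A : 'M[F]_(m, n)) :
  row_free A -> injective f -> row_free (rowsub f A).
Proof.
move=> freeA finj; apply/inj_row_free => v.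
rewrite rowsubE mulmxA => /eqP; rewrite mulmx_free_eq0 // => /eqP/rowP vf0.
apply/rowP => i; have := vf0 (f i); rewrite !mxE => <-.
rewrite (big_only1 i) // => [|l li _]; rewrite !mxE (inj_eq finj) ?eqxx ?mulr1 //.
by rewrite (negbTE li) mulr0.
Qed.

Lemma left_kernel_free (F : fieldType) m n k (M : 'M[F]_(m, n)) :
  (k <= m - n)%N -> exists2 B : 'M[F]_(k, m), row_free B & B *m M = 0.
Proof.
move=> hk; have kr : (k <= \rank (kermx M))%N.
  by rewrite mxrank_ker; have := rank_leq_col M; lia.
exists (rowsub (widen_ord kr) (row_base (kermx M))).
  have wi : injective (widen_ord kr) by move=> x y [] /val_inj.
  exact: (row_free_rowsub (row_base_free (kermx M)) wi).
have /sub_kermxP BM0 : (row_base (kermx M) <= kermx M)%MS by rewrite eq_row_base.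
by rewrite mul_rowsub_mx BM0; apply/matrixP => i b; rewrite !mxE.
Qed.

Section MinorCombinations.
Variables (R : comNzRingType) (N n D : nat).
Implicit Types (c : 'rV[R]_#|{: incr_sel n D}|) (M : 'M[{mpoly R[N]}]_(D, n)).

Definition minor_comb c M : {mpoly R[N]} :=
  \sum_u c 0 u *: \det (rowsub (val (enum_val u)) M).

Lemma minor_comb_in_span c M : exists coef : {ffun 'I_n -> 'I_D} -> R,
  minor_comb c M = \sum_(f | incr_rows f) coef f *: \det (rowsub f M).
Proof.
exists (fun f => oapp (fun u : incr_sel n D => c 0 (enum_rank u)) 0 (insub f)).
by rewrite big_incr_rows; apply: eq_bigr => u _; rewrite valK /= enum_valK.
Qed.

Lemma prod_homog k (F : 'I_k -> {mpoly R[N]}) :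
  (forall i, F i \is 1.-homog) -> \prod_(i < k) F i \is k.-homog.
Proof.
elim: k F => [|k IH] F hF; first by rewrite big_ord0 dhomog1.
rewrite big_ord_recr /=.
have := IH (fun i => F (widen_ord (leqnSn k) i)) (fun i => hF _).
move=> /dhomogM /(_ (hF ord_max)).
by rewrite addn1.
Qed.

Lemma det_homog (A : 'M[{mpoly R[N]}]_n) :
  (forall i k, A i k \is 1.-homog) -> \det A \is n.-homog.
Proof.
move=> hA; apply: rpred_sum => s _.
have hp : \prod_(i < n) A i (s i) \is n.-homog by apply: prod_homog.
by case: (odd_perm s); rewrite ?expr1 ?expr0 ?mulN1r ?mul1r ?rpredN.
Qed.

Lemma minor_comb_homog c M :
  (forall r k, M r k \is 1.-homog) -> minor_comb c M \is n.-homog.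
Proof.
by move=> hM; apply: rpred_sum => u _; apply/rpredZ/det_homog => i k; rewrite mxE.
Qed.

Lemma meval_minor_comb (z : 'I_N -> R) c M :
  (minor_comb c M).@[z]
  = \sum_u c 0 u * \det (rowsub (val (enum_val u)) (map_mx (meval z) M)).
Proof.
rewrite raddf_sum /=; apply: eq_bigr => u _.
by rewrite mevalZ -det_map_mx map_mxsub.
Qed.

Lemma sum_minor_comb k (a : 'I_k -> R) (B : 'M[R]_(k, #|{: incr_sel n D}|)) M :
  \sum_(i < k) a i *: minor_comb (row i B) M = minor_comb (\row_i a i *m B) M.
Proof.
under eq_bigr => i _ do rewrite scaler_sumr.
rewrite exchange_big; apply: eq_bigr => u _.
by rewrite !mxE scaler_suml; apply: eq_bigr => i _; rewrite !mxE scalerA.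
Qed.

Variable h : 'I_D -> 'I_n -> 'I_N.
Hypothesis h_inj : injective (fun rk : 'I_D * 'I_n => h rk.1 rk.2).

(* At this 0/1 point the generic matrix becomes the 0/1 matrix of the selection
   g, so the only maximal minor that survives is the one on the rows of g. *)
Definition selection_point (g : {ffun 'I_n -> 'I_D}) (v : 'I_N) : R :=
  [exists k, v == h (g k) k]%:R.

Lemma map_generic_selection_point g :
  map_mx (meval (selection_point g)) (\matrix_(r, k) 'X_(h r k))
  = \matrix_(r, k) ((r == g k)%:R : R).
Proof.
apply/matrixP => r k; rewrite !mxE mevalXU /selection_point.
suff -> : [exists k', h r k == h (g k') k'] = (r == g k) by [].
apply/existsP/eqP => [[k' /eqP e]|->]; last by exists k.
by have [-> ->] := @h_inj (r, k) (g k', k') e.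
Qed.

Lemma minor_comb_generic_eq0 c :
  minor_comb c (\matrix_(r, k) 'X_(h r k)) = 0 -> c = 0.
Proof.
move=> c0; apply/rowP => u; rewrite mxE.
have := congr1 (meval (selection_point (val (enum_val u)))) c0.
rewrite meval_minor_comb meval0 map_generic_selection_point => <-.
rewrite (big_only1 u) // => [|u' u'u _].
  by rewrite det_rowsub_indicator ?(valP (enum_val u)) // eqxx mulr1.
rewrite det_rowsub_indicator ?(valP (enum_val u)) ?(valP (enum_val u')) //.
by rewrite val_eqE (inj_eq enum_val_inj) (negbTE u'u) mulr0.
Qed.

End MinorCombinations.

Lemma lin_indep_minor_comb (R : fieldType) N n D k
    (B : 'M[R]_(k, #|{: incr_sel n D}|)) (h : 'I_D -> 'I_n -> 'I_N) :
  injective (fun rk : 'I_D * 'I_n => h rk.1 rk.2) -> row_free B ->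
  lin_indep (fun i => minor_comb (row i B) (\matrix_(r, k) 'X_(h r k))).
Proof.
move=> h_inj freeB c.
rewrite sum_minor_comb => /(minor_comb_generic_eq0 h_inj) /eqP.
by rewrite mulmx_free_eq0 // => /eqP/rowP c0 i; have := c0 i; rewrite !mxE.
Qed.

Definition Fnj_var t d (n j : 'I_t) (hnj : n != j) (r : 'I_#|{: M2 d}|) (k : 'I_d)
  : 'I_(NV t d) := enum_rank (Sub ((n, j), (enum_val r, k)) hnj : Idx t d).

Lemma FnjE (R : nzRingType) t d (n j : 'I_t) (hnj : n != j) :
  Fnj R d hnj = \matrix_(r, k) 'X_(Fnj_var hnj r k).
Proof. by []. Qed.

Lemma Fnj_homog (R : nzRingType) t d (n j : 'I_t) (hnj : n != j) r k :
  Fnj R d hnj r k \is 1.-homog.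
Proof. by rewrite mxE dhomogX; exact/eqP/mdeg1. Qed.

Lemma Fnj_var_inj t d (n j : 'I_t) (hnj : n != j) :
  injective (fun rk : 'I_#|{: M2 d}| * 'I_d => Fnj_var hnj rk.1 rk.2).
Proof.
by move=> [r k] [r' k'] /enum_rank_inj /(congr1 val) /= [/enum_val_inj -> ->].
Qed.

Section AttentionMinors.
Variables (R : fieldType) (a d t : nat) (n j : 'I_t) (hnj : n != j).
Hypothesis two_neq0 : (2%:R : R) != 0.

Lemma map_Fnj_mu (Q K : 'M[R]_(a, d)) (V : 'rV[R]_d) :
  map_mx (meval (@mu R a d t Q K V)) (Fnj R d hnj)
  = lin_form_mx (@sym_coef R d) V *m (K^T *m Q).
Proof.
apply/matrixP => r k; rewrite mul_sym_mx mxE FnjE mxE mevalXU /mu /Fnj_var.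
by rewrite enum_rankK /= coef_y_val.
Qed.

Lemma minor_comb_Fnj_mu_eq0 (c : 'rV[R]_#|{: incr_sel d #|{: M2 d}|}|) Q K V :
  c *m minor_coef_mx (@sym_coef R d) = 0 ->
  (minor_comb c (Fnj R d hnj)).@[@mu R a d t Q K V] = 0.
Proof.
move=> cK; rewrite meval_minor_comb map_Fnj_mu.
under eq_bigr => u _ do rewrite -mul_rowsub_mx det_mulmx mulrA.
by rewrite -mulr_suml minor_comb_lin_form_mx_eq0 ?mul0r.
Qed.

End AttentionMinors.

Lemma minor_count_excess d : (0 < d)%N ->
  ('C('C(d.+1, 2), d) - 'C(2 * d - 1, d)
   <= #|{: incr_sel d #|{: M2 d}|}| - #|{: mset d d}|)%N.
Proof.
case: d => // d _; have := card_incr_sel d.+1 #|{: M2 d.+1}|.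
rewrite card_M2 card_mset; have -> : (2 * d.+1 - 1 = d.+1 + d)%N by lia.
lia.
Qed.

Theorem mainTheorem11 (R : realType) (d a t : nat)
    (hd : (2 <= d)%N) (hda : (d <= a)%N) (ht : (2 <= t)%N)
    (n j : 'I_t) (hnj : n != j) :
  exists ps : 'I_('C('C(d.+1, 2), d) - 'C(2 * d - 1, d)) -> {mpoly R[NV t d]},
    lin_indep ps /\
    forall i, [/\ ps i \is d.-homog,
                  in_span_of_max_minors hnj (ps i) &
                  vanishes_on_attention_variety a (ps i)].
Proof.
have [B freeB BK] := left_kernel_free (minor_coef_mx (@sym_coef R d))
                                   (minor_count_excess (ltnW hd)).
exists (fun i => minor_comb (row i B) (Fnj R d hnj)); split.
  by rewrite FnjE; apply: lin_indep_minor_comb freeB; exact: Fnj_var_inj.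
move=> i; split.
- by apply: minor_comb_homog => r k; exact: Fnj_homog.
- exact: minor_comb_in_span.
- move=> z; apply => Q K V.
  apply: minor_comb_Fnj_mu_eq0; first by rewrite pnatr_eq0.
  by rewrite -row_mul BK row0.
Qed.
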